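(* Let $k\in\mathbb{N}_0$, $n=2k+1$, and let $\Omega\subset\mathbb{R}^p$ be a rectangular domain equipped with a regular rectangular grid. For a sufficiently smooth function $\phi:\Omega\to\mathbb{R}$ let $\mathcal{H}_\phi$ be its global interpolant. Then $\mathcal{F}[\mathcal{H}_\phi]\le\mathcal{F}[\phi]$. Moreover, $\mathcal{H}_\phi$ minimizes $\mathcal{F}$ in the following class: if $\psi:\Omega\to\mathbb{R}$ is such that its restriction to each closed grid cell $Q$ is smooth up to the boundary of $Q$, and for each cell $Q$, each vertex $\vec x_{\vec m}$ of $Q$ and each $\vec\alpha\in\{0,\dots,k\}^p$ one has $\partial^{\vec\alpha}(\psi|_Q)(\vec x_{\vec m})=\partial^{\vec\alpha}\phi(\vec x_{\vec m})$, then $\mathcal{F}[\mathcal{H}_\phi]\le\mathcal{F}[\psi]$.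
   Context: Multi-index notation: $\partial^{\vec\alpha}=\partial_1^{\alpha_1}\cdots\partial_p^{\alpha_p}$. A $p$-$n$ polynomial is a polynomial in $p$ variables of degree at most $n$ in each variable separately. Global interpolant: given grid data $\phi^{\vec m}_{\vec\alpha}$ at each grid point $\vec x_{\vec m}$, $\vec\alpha\in\{0,\dots,k\}^p$, the global interpolant is the function which on each grid cell $Q$ equals the unique $p$-$n$ polynomial $P_Q$ with $\partial^{\vec\alpha}P_Q(\vec x_{\vec m})=\phi^{\vec m}_{\vec\alpha}$ at all vertices $\vec x_{\vec m}$ of $Q$ and all $\vec\alpha\in\{0,\dots,k\}^p$ (it is $C^k$ across cell boundaries). $\mathcal{H}_\phi$ is the global interpolant with data $\phi^{\vec m}_{\vec\alpha}=\partial^{\vec\alpha}\phi(\vec x_{\vec m})$. Stability functional: with $\vec\beta=(k+1,\dots,k+1)\in\mathbb{N}_0^p$, $\mathcal{F}[\phi]=\int_\Omega(\partial^{\vec\beta}\phi(\vec x))^2\,d\vec x$, where for functions smooth on each cell (such as $\mathcal{H}_\phi$ and $\psi$) this is interpreted as the sum over cells $Q$ of $\int_Q(\partial^{\vec\beta}(\cdot|_Q))^2\,d\vec x$. *)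

From Stdlib Require Import Reals Lra List Arith ClassicalEpsilon.
Open Scope R_scope.

(* Points of R^p are represented as  x : nat -> R  with x i = 0 for i >= p
   (enforced by the membership predicates below).  Multi-indices are
   nat -> nat, with entries beyond p equal to 0. *)
Definition pt := nat -> R.
Definition mi := nat -> nat.

Definition upd (x : pt) (i : nat) (t : R) : pt :=
  fun j => if Nat.eqb j i then t else x j.

Definition incr (al : mi) (i : nat) : mi :=
  fun j => if Nat.eqb j i then S (al j) else al j.

Definition mi0 : mi := fun _ => O.

Definition box (p : nat) (l u : pt) (x : pt) : Prop :=
  forall i, ((i < p)%nat -> l i <= x i <= u i) /\ ((p <= i)%nat -> x i = 0).

Definition partial_within (S : pt -> Prop) (i : nat) (g g' : pt -> R) : Prop :=
  forall x, S x -> forall eps, 0 < eps -> exists delta, 0 < delta /\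
    forall t, t <> 0 -> Rabs t < delta -> S (upd x i (x i + t)) ->
      Rabs ((g (upd x i (x i + t)) - g x) / t - g' x) < eps.

Definition cont_within (p : nat) (S : pt -> Prop) (g : pt -> R) : Prop :=
  forall x, S x -> forall eps, 0 < eps -> exists delta, 0 < delta /\
    forall y, S y -> (forall i, (i < p)%nat -> Rabs (y i - x i) < delta) ->
      Rabs (g y - g x) < eps.

(* f is C^infinity on S (up to the boundary), D al being its partial
   derivative  d^al f  on S. *)
Definition smooth_on (p : nat) (S : pt -> Prop) (f : pt -> R) (D : mi -> pt -> R)
  : Prop :=
  (forall x, S x -> D mi0 x = f x) /\
  (forall al i, (i < p)%nat -> partial_within S i (D al) (D (incr al i))) /\
  (forall al, cont_within p S (D al)).

(* Riemann integral (0 if not Riemann integrable; proof-irrelevant) *)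
Definition RInt (f : R -> R) (a b : R) : R :=
  match excluded_middle_informative (inhabited (Riemann_integrable f a b)) with
  | left H => RiemannInt (epsilon H (fun _ => True))
  | right _ => 0
  end.

Fixpoint box_int (d : nat) (l u : pt) (g : pt -> R) (x : pt) : R :=
  match d with
  | O => g x
  | S d' => RInt (fun t => box_int d' l u g (upd x d' t)) (l d') (u d')
  end.

Definition integral (p : nat) (l u : pt) (g : pt -> R) : R :=
  box_int p l u g (fun _ => 0).

Fixpoint msum (d : nat) (N : nat -> nat) (F : mi -> R) : R :=
  match d with
  | O => F mi0
  | S d' => fold_right Rplus 0
              (map (fun j => msum d' N (fun c => F (fun i => if Nat.eqb i d' then j else c i)))
                   (seq 0 (N d')))
  end.

Definition mprod (p : nat) (F : nat -> R) : R :=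
  fold_right Rmult 1 (map F (seq 0 p)).

Definition is_pn_poly (p n : nat) (P : pt -> R) : Prop :=
  exists coef : mi -> R, forall x,
    P x = msum p (fun _ => S n) (fun g => coef g * mprod p (fun i => x i ^ g i)).

Definition mi_le (p k : nat) (al : mi) : Prop :=
  forall i, ((i < p)%nat -> (al i <= k)%nat) /\ ((p <= i)%nat -> al i = O).

Definition beta (p k : nat) : mi := fun i => if Nat.ltb i p then S k else O.

(* Regular grid on  Omega = prod_{i<p} [a i, b i]  with N i cells along axis i *)
Definition is_cell (p : nat) (N : nat -> nat) (c : mi) : Prop :=
  forall i, ((i < p)%nat -> (c i < N i)%nat) /\ ((p <= i)%nat -> c i = O).

Definition cell_lo (a b : pt) (N : nat -> nat) (c : mi) : pt :=
  fun i => a i + INR (c i) * ((b i - a i) / INR (N i)).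
Definition cell_hi (a b : pt) (N : nat -> nat) (c : mi) : pt :=
  fun i => a i + INR (S (c i)) * ((b i - a i) / INR (N i)).

Definition cell_box p a b N c : pt -> Prop := box p (cell_lo a b N c) (cell_hi a b N c).

Definition is_vertex (p : nat) (a b : pt) (N : nat -> nat) (c : mi) (v : pt) : Prop :=
  forall i, ((i < p)%nat -> v i = cell_lo a b N c i \/ v i = cell_hi a b N c i) /\
            ((p <= i)%nat -> v i = 0).

Definition F_global (p k : nat) (a b : pt) (D : mi -> pt -> R) : R :=
  integral p a b (fun x => (D (beta p k) x) ^ 2).

(* F on a cellwise-smooth function: DC c is the derivative family of the
   restriction to cell c *)
Definition F_cells (p k : nat) (a b : pt) (N : nat -> nat) (DC : mi -> mi -> pt -> R) : R :=
  msum p N (fun c => integral p (cell_lo a b N c) (cell_hi a b N c)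
                        (fun x => (DC c (beta p k) x) ^ 2)).

From Stdlib Require Import Reals Lra Lia List Arith Classical_Prop ClassicalEpsilon
  FunctionalExtensionality.
Open Scope R_scope.

(* On a cell Q write psi = H + e, where H is the polynomial piece of the
   interpolant and e = psi - H.  Expanding the square,
     int_Q (d^beta psi)^2 = int_Q (d^beta H)^2 + 2 int_Q d^beta H d^beta e + int_Q (d^beta e)^2,
   so it suffices that the cross term vanishes.  Integrating by parts k+1
   times in the direction x_i moves k+1 derivatives from e onto H: the boundary
   terms only involve derivatives of e of order <= k in x_i on the two faces
   x_i = const, and the last interior term contains a derivative of H of order
   2k+2 = n+1 in x_i, which is zero.  Doing this for every direction reduces
   everything to derivatives d^gamma e, gamma in {0..k}^p, at the vertices,
   which vanish by the interpolation conditions.  Summing over cells gives the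
   minimality; taking psi = phi and using additivity of the integral over the
   grid gives F[H] <= F[phi]. *)

(** * Calculus in one variable *)

Definition cont_on (a b : R) (f : R -> R) : Prop :=
  forall x, a <= x <= b -> forall eps, 0 < eps -> exists delta, 0 < delta /\
    forall y, a <= y <= b -> Rabs (y - x) < delta -> Rabs (f y - f x) < eps.

Definition has_deriv_on (a b : R) (f f' : R -> R) : Prop :=
  forall x, a < x < b -> derivable_pt_lim f x (f' x).

(* Extending f constantly outside [a, b] turns continuity on [a, b] into
   continuity on R, which is what the Stdlib integration lemmas require. *)
Definition clamp (a b x : R) : R := Rmax a (Rmin b x).

Lemma clamp_in : forall a b x, a <= b -> a <= clamp a b x <= b.
Proof. intros; unfold clamp, Rmax, Rmin; repeat destruct Rle_dec; lra. Qed.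

Lemma clamp_id : forall a b x, a <= x <= b -> clamp a b x = x.
Proof. intros; unfold clamp, Rmax, Rmin; repeat destruct Rle_dec; lra. Qed.

Lemma clamp_lipschitz : forall a b x y, a <= b ->
  Rabs (clamp a b y - clamp a b x) <= Rabs (y - x).
Proof.
  intros; unfold clamp, Rmax, Rmin; repeat destruct Rle_dec;
  unfold Rabs; repeat destruct Rcase_abs; lra.
Qed.

Lemma continuity_pt_clamp : forall a b f, a <= b -> cont_on a b f ->
  forall x, continuity_pt (fun y => f (clamp a b y)) x.
Proof.
  intros a b f hab hc x.
  unfold continuity_pt, continue_in, limit1_in, limit_in; simpl; unfold R_dist.
  intros eps heps.
  destruct (hc (clamp a b x) (clamp_in a b x hab) eps heps) as [d [hd H]].
  exists d; split; [lra|].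
  intros y [_ hy].
  apply H; [apply clamp_in; auto|].
  eapply Rle_lt_trans; [apply clamp_lipschitz|]; auto.
Qed.

Lemma cont_on_integrable : forall a b f, a <= b -> cont_on a b f -> Riemann_integrable f a b.
Proof.
  intros a b f hab hc.
  apply Riemann_integrable_ext with (f := fun y => f (clamp a b y)).
  - intros x hx. rewrite Rmin_left in hx by auto. rewrite Rmax_right in hx by auto.
    rewrite clamp_id; auto.
  - apply continuity_implies_RiemannInt; auto.
    intros; apply continuity_pt_clamp; auto.
Qed.

Lemma cont_on_sub : forall a b c d f, a <= c -> d <= b -> cont_on a b f -> cont_on c d f.
Proof.
  intros a b c d f h1 h2 hc x hx eps heps.
  destruct (hc x ltac:(lra) eps heps) as [de [hde H]].
  exists de; split; auto. intros; apply H; auto; lra.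
Qed.

Lemma continuity_pt_cont_on : forall a b f,
  (forall x, a <= x <= b -> continuity_pt f x) -> cont_on a b f.
Proof.
  intros a b f hc x hx eps heps.
  specialize (hc x hx).
  unfold continuity_pt, continue_in, limit1_in, limit_in in hc; simpl in hc; unfold R_dist in hc.
  destruct (hc eps heps) as [d [hd H]].
  exists d; split; [lra|]. intros y hy hyx.
  destruct (Req_dec y x) as [->|ne].
  - rewrite Rminus_diag, Rabs_R0; auto.
  - apply H. split; auto. split; auto. exact I.
Qed.

Lemma RInt_RiemannInt : forall f a b (pr : Riemann_integrable f a b), RInt f a b = RiemannInt pr.
Proof.
  intros. unfold RInt. destruct excluded_middle_informative as [H|H].
  - apply RiemannInt_P5.
  - exfalso; apply H; exact (inhabits pr).
Qed.

Lemma Riemann_integrable_plus : forall f g a b,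
  Riemann_integrable f a b -> Riemann_integrable g a b ->
  Riemann_integrable (fun t => f t + g t) a b.
Proof.
  intros. apply Riemann_integrable_ext with (f := fun t => f t + 1 * g t).
  - intros; ring.
  - apply RiemannInt_P10; auto.
Qed.

Lemma Riemann_integrable_minus : forall f g a b,
  Riemann_integrable f a b -> Riemann_integrable g a b ->
  Riemann_integrable (fun t => f t - g t) a b.
Proof.
  intros. apply Riemann_integrable_ext with (f := fun t => f t + (-1) * g t).
  - intros; ring.
  - apply RiemannInt_P10; auto.
Qed.

Lemma RInt_plus_scal : forall f g a b c,
  Riemann_integrable f a b -> Riemann_integrable g a b ->
  RInt (fun t => f t + c * g t) a b = RInt f a b + c * RInt g a b.
Proof.
  intros f g a b c hf hg.
  assert (hfg : Riemann_integrable (fun t => f t + c * g t) a b) by (apply RiemannInt_P10; auto).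
  rewrite (RInt_RiemannInt _ _ _ hfg), (RInt_RiemannInt _ _ _ hf), (RInt_RiemannInt _ _ _ hg).
  apply RiemannInt_P13.
Qed.

Lemma RInt_const : forall a b c, RInt (fun _ => c) a b = c * (b - a).
Proof.
  intros. rewrite (RInt_RiemannInt (fun _ => c) a b (RiemannInt_P14 a b c)).
  exact (RiemannInt_P15 (RiemannInt_P14 a b c)).
Qed.

Lemma RInt_zero : forall a b, RInt (fun _ => 0) a b = 0.
Proof. intros; rewrite RInt_const; ring. Qed.

Lemma RInt_plus : forall f g a b, Riemann_integrable f a b -> Riemann_integrable g a b ->
  RInt (fun t => f t + g t) a b = RInt f a b + RInt g a b.
Proof.
  intros. replace (fun t => f t + g t) with (fun t => f t + 1 * g t)
    by (apply functional_extensionality; intros; ring).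
  rewrite RInt_plus_scal; auto; ring.
Qed.

Lemma RInt_minus : forall f g a b, Riemann_integrable f a b -> Riemann_integrable g a b ->
  RInt (fun t => f t - g t) a b = RInt f a b - RInt g a b.
Proof.
  intros. replace (fun t => f t - g t) with (fun t => f t + (-1) * g t)
    by (apply functional_extensionality; intros; ring).
  rewrite RInt_plus_scal; auto; ring.
Qed.

Lemma RInt_scal : forall f a b c, Riemann_integrable f a b ->
  RInt (fun t => c * f t) a b = c * RInt f a b.
Proof.
  intros. replace (fun t => c * f t) with (fun t => (fun _ => 0) t + c * f t)
    by (apply functional_extensionality; intros; ring).
  rewrite RInt_plus_scal, RInt_zero; [ring|apply RiemannInt_P14|auto].
Qed.

Lemma RInt_ext : forall f g a b, a <= b -> (forall t, a <= t <= b -> f t = g t) ->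
  RInt f a b = RInt g a b.
Proof.
  intros f g a b hab H. unfold RInt.
  destruct excluded_middle_informative as [[hf]|hf];
  destruct excluded_middle_informative as [[hg]|hg].
  - apply RiemannInt_P18; auto. intros; apply H; lra.
  - exfalso; apply hg; constructor. apply Riemann_integrable_ext with f; auto.
    intros x hx; rewrite Rmin_left in hx by auto; rewrite Rmax_right in hx by auto; auto.
  - exfalso; apply hf; constructor. apply Riemann_integrable_ext with g; auto.
    intros x hx; rewrite Rmin_left in hx by auto; rewrite Rmax_right in hx by auto; symmetry; auto.
  - reflexivity.
Qed.

Lemma RInt_le : forall f g a b, a <= b -> Riemann_integrable f a b -> Riemann_integrable g a b ->
  (forall t, a <= t <= b -> f t <= g t) -> RInt f a b <= RInt g a b.
Proof.
  intros f g a b hab hf hg H. rewrite (RInt_RiemannInt _ _ _ hf), (RInt_RiemannInt _ _ _ hg).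
  apply RiemannInt_P19; auto. intros; apply H; lra.
Qed.

Lemma RInt_Rabs_le : forall f a b M, a <= b -> Riemann_integrable f a b ->
  (forall t, a <= t <= b -> Rabs (f t) <= M) -> Rabs (RInt f a b) <= M * (b - a).
Proof.
  intros f a b M hab hf H. apply Rabs_le. split.
  - replace (- (M * (b - a))) with (RInt (fun _ => - M) a b) by (rewrite RInt_const; ring).
    apply RInt_le; auto. apply RiemannInt_P14.
    intros t ht; specialize (H t ht); unfold Rabs in H; destruct Rcase_abs in H; lra.
  - rewrite <- RInt_const. apply RInt_le; auto. apply RiemannInt_P14.
    intros t ht; specialize (H t ht); unfold Rabs in H; destruct Rcase_abs in H; lra.
Qed.

Lemma RInt_chasles : forall f a b c, a <= b -> b <= c -> cont_on a c f ->
  RInt f a b + RInt f b c = RInt f a c.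
Proof.
  intros f a b c h1 h2 hc.
  assert (i1 : Riemann_integrable f a b)
    by (apply cont_on_integrable; auto; eapply cont_on_sub; [| |eauto]; lra).
  assert (i2 : Riemann_integrable f b c)
    by (apply cont_on_integrable; auto; eapply cont_on_sub; [| |eauto]; lra).
  assert (i3 : Riemann_integrable f a c) by (apply cont_on_integrable; auto; lra).
  rewrite (RInt_RiemannInt _ _ _ i1), (RInt_RiemannInt _ _ _ i2), (RInt_RiemannInt _ _ _ i3).
  apply RiemannInt_P26.
Qed.

Lemma derivable_pt_lim_clamp : forall a b f f' c, a < c < b -> derivable_pt_lim f c (f' c) ->
  derivable_pt_lim (fun y => f (clamp a b y)) c (f' c).
Proof.
  intros a b f f' c hc hd eps heps.
  destruct (hd eps heps) as [d hd'].
  assert (hp : 0 < Rmin d (Rmin (c - a) (b - c))) by (repeat apply Rmin_pos; try apply cond_pos; lra).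
  exists (mkposreal _ hp). intros h h0 hh. simpl in hh.
  assert (m1 := Rmin_l d (Rmin (c - a) (b - c))).
  assert (m2 := Rmin_r d (Rmin (c - a) (b - c))).
  assert (m3 := Rmin_l (c - a) (b - c)). assert (m4 := Rmin_r (c - a) (b - c)).
  rewrite !clamp_id; [apply hd'; auto; lra|lra|].
  unfold Rabs in hh; destruct Rcase_abs in hh; lra.
Qed.

Lemma MVT_cont_on : forall a b f f', a < b -> cont_on a b f -> has_deriv_on a b f f' ->
  exists c, a < c < b /\ f b - f a = f' c * (b - a).
Proof.
  intros a b f f' hab hc hd.
  set (fc := fun y => f (clamp a b y)).
  assert (D : forall c, a < c < b -> derivable_pt_lim fc c (f' c))
    by (intros; apply derivable_pt_lim_clamp; auto).
  pose (pr1 := fun c (P : a < c < b) => exist (fun l => derivable_pt_lim fc c l) (f' c) (D c P)).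
  destruct (MVT fc id a b pr1 (fun c _ => derivable_pt_id c) hab) as [c [P E]].
  - intros; apply continuity_pt_clamp; auto; lra.
  - intros; apply derivable_continuous_pt, derivable_pt_id.
  - exists c; split; auto.
    rewrite derive_pt_id in E. unfold derive_pt, pr1 in E; simpl in E.
    unfold fc, id in E. rewrite !clamp_id in E by lra. lra.
Qed.

Lemma cont_on_minus : forall a b f g, cont_on a b f -> cont_on a b g ->
  cont_on a b (fun x => f x - g x).
Proof.
  intros a b f g hf hg x hx eps heps.
  destruct (hf x hx (eps/2) ltac:(lra)) as [d1 [hd1 H1]].
  destruct (hg x hx (eps/2) ltac:(lra)) as [d2 [hd2 H2]].
  exists (Rmin d1 d2). split; [apply Rmin_pos; auto|].
  intros y hy hyx.
  assert (Rmin d1 d2 <= d1) by apply Rmin_l. assert (Rmin d1 d2 <= d2) by apply Rmin_r.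
  specialize (H1 y hy ltac:(lra)). specialize (H2 y hy ltac:(lra)).
  replace (f y - g y - (f x - g x)) with ((f y - f x) - (g y - g x)) by ring.
  eapply Rle_lt_trans; [apply Rabs_triang|]. rewrite Rabs_Ropp. lra.
Qed.

(* The primitive Psi of (the clamped) f' and f have the same derivative inside
   (a, b), so Psi - f is constant on [a, b] by the mean value theorem. *)
Lemma RInt_deriv : forall a b f f', a < b -> cont_on a b f -> has_deriv_on a b f f' ->
  cont_on a b f' -> RInt f' a b = f b - f a.
Proof.
  intros a b f f' hab hc hd hc'.
  set (g := fun y => f' (clamp a b y)).
  assert (hle : a <= b) by lra.
  assert (C0 : forall x, a <= x <= b -> continuity_pt g x)
    by (intros; apply continuity_pt_clamp; auto).
  set (Psi := primitive hle (FTC_P1 hle C0)).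
  assert (DP : forall x, a <= x <= b -> derivable_pt_lim Psi x (g x))
    by (intros; apply RiemannInt_P28; auto).
  assert (ig : Riemann_integrable g a b) by (apply continuity_implies_RiemannInt; auto).
  assert (E1 : RInt f' a b = RiemannInt ig).
  { rewrite <- (RInt_RiemannInt _ _ _ ig). apply RInt_ext; auto.
    intros; unfold g; rewrite clamp_id; auto. }
  rewrite E1, (RiemannInt_P20 hle (FTC_P1 hle C0) ig). fold Psi.
  destruct (MVT_cont_on a b (fun x => Psi x - f x) (fun _ => 0) hab) as [c [hc1 E]].
  - apply cont_on_minus; auto. apply continuity_pt_cont_on.
    intros y hy. apply derivable_continuous_pt. exists (g y). apply DP; auto.
  - intros x hx.
    replace 0 with (g x - f' x) by (unfold g; rewrite clamp_id; lra).
    apply derivable_pt_lim_minus; [apply DP; lra|apply hd; auto].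
  - lra.
Qed.

(* Proved by taking the supremum of the s in [a, b] for which one delta works
   for all t in [a, s]. *)
Lemma tube_lemma : forall (X : Type) (BX : X -> Prop) (near : R -> X -> Prop)
  (h : R -> X -> R) (x0 : X) (a b : R),
  a <= b ->
  (forall d1 d2 x, d1 <= d2 -> near d1 x -> near d2 x) ->
  (forall d, 0 < d -> near d x0) -> BX x0 ->
  (forall t, a <= t <= b -> forall eps, 0 < eps -> exists delta, 0 < delta /\
     forall t' x, a <= t' <= b -> Rabs (t' - t) < delta -> BX x -> near delta x ->
       Rabs (h t' x - h t x0) < eps) ->
  forall eps, 0 < eps -> exists delta, 0 < delta /\
    forall t x, a <= t <= b -> BX x -> near delta x -> Rabs (h t x - h t x0) < eps.
Proof.
  intros X BX near h x0 a b hab hmono hnear0 hB0 hc eps heps.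
  set (E := fun s => a <= s <= b /\ exists delta, 0 < delta /\
     forall t x, a <= t <= s -> BX x -> near delta x -> Rabs (h t x - h t x0) < eps).
  assert (Ea : E a).
  { split; [lra|]. destruct (hc a ltac:(lra) eps heps) as [d [hd H]].
    exists d; split; auto. intros t x ht hx hn. replace t with a by lra.
    apply H; auto; try lra. rewrite Rminus_diag, Rabs_R0; auto. }
  assert (bE : bound E) by (exists b; intros s [hs _]; lra).
  destruct (completeness E bE (ex_intro _ a Ea)) as [S [hub hlub]].
  assert (haS : a <= S) by (apply hub; auto).
  assert (hSb : S <= b) by (apply hlub; intros s [hs _]; lra).
  destruct (hc S ltac:(lra) (eps/2) ltac:(lra)) as [dS [hdS HS]].
  assert (Hs : exists s, E s /\ S - dS < s).
  { apply NNPP; intro N.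
    assert (S <= S - dS); [|lra].
    apply hlub. intros s hs. apply Rnot_lt_le. intro hlt. apply N. exists s; auto. }
  destruct Hs as [s [[hs1 [ds [hds Hds]]] hsS]].
  set (s' := Rmin b (S + dS/2)).
  assert (Es' : E s').
  { split; [unfold s'; unfold Rmin; destruct Rle_dec; lra|].
    exists (Rmin ds dS). split; [apply Rmin_pos; auto|].
    intros t x ht hx hn.
    destruct (Rle_dec t s) as [hts|hts].
    - apply Hds; auto; [lra|]. eapply hmono; [|apply hn]. apply Rmin_l.
    - assert (ht' : Rabs (t - S) < dS).
      { assert (s' <= S + dS/2) by apply Rmin_r. unfold Rabs; destruct Rcase_abs; lra. }
      assert (hn' : near dS x) by (eapply hmono; [|apply hn]; apply Rmin_r).
      assert (s' <= b) by apply Rmin_l.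
      assert (H1 := HS t x ltac:(lra) ht' hx hn').
      assert (H2 := HS t x0 ltac:(lra) ht' ltac:(auto) (hnear0 dS hdS)).
      replace (h t x - h t x0) with ((h t x - h S x0) - (h t x0 - h S x0)) by ring.
      eapply Rle_lt_trans; [apply Rabs_triang|]. rewrite Rabs_Ropp. lra. }
  assert (hs'S : s' <= S) by (apply hub; auto).
  assert (hs'b : s' = b) by (unfold s' in *; unfold Rmin in *; destruct Rle_dec; lra).
  destruct Es' as [_ [d [hd Hd]]]. exists d; split; auto.
  intros t x ht hx hn. apply Hd; auto. lra.
Qed.

(** * Iterated integrals over boxes *)

Lemma upd_same : forall x i t, upd x i t i = t.
Proof. intros; unfold upd; rewrite Nat.eqb_refl; auto. Qed.

Lemma upd_other : forall x i t j, j <> i -> upd x i t j = x j.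
Proof. intros; unfold upd; destruct (Nat.eqb_spec j i); auto; lia. Qed.

Lemma upd_upd : forall x i s t, upd (upd x i s) i t = upd x i t.
Proof.
  intros; apply functional_extensionality; intro j; unfold upd.
  destruct (Nat.eqb_spec j i); auto.
Qed.

Lemma upd_comm : forall x i j s t, i <> j -> upd (upd x i s) j t = upd (upd x j t) i s.
Proof.
  intros; apply functional_extensionality; intro m; unfold upd.
  destruct (Nat.eqb_spec m i); destruct (Nat.eqb_spec m j); auto; lia.
Qed.

Lemma upd_id : forall x i, upd x i (x i) = x.
Proof.
  intros; apply functional_extensionality; intro j; unfold upd.
  destruct (Nat.eqb_spec j i); subst; auto.
Qed.

Lemma box_upd : forall p l u x i t, box p l u x -> (i < p)%nat -> l i <= t <= u i ->
  box p l u (upd x i t).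
Proof.
  intros p l u x i t hx hi ht j. unfold upd. destruct (Nat.eqb_spec j i).
  - subst; split; auto. intros; lia.
  - apply hx.
Qed.

Lemma box_int_base_eq : forall d l u f x x', (forall i, (d <= i)%nat -> x i = x' i) ->
  box_int d l u f x = box_int d l u f x'.
Proof.
  induction d; intros l u f x x' H; simpl.
  - f_equal. apply functional_extensionality; intros; apply H; lia.
  - f_equal. apply functional_extensionality; intro t. apply IHd.
    intros i hi. unfold upd. destruct (Nat.eqb_spec i d); auto. apply H; lia.
Qed.

Lemma box_int_bounds_eq : forall d l u l' u' f x,
  (forall i, (i < d)%nat -> l i = l' i /\ u i = u' i) ->
  box_int d l u f x = box_int d l' u' f x.
Proof.
  induction d; intros l u l' u' f x H; simpl; auto.
  destruct (H d ltac:(lia)) as [-> ->]. f_equal. apply functional_extensionality; intro t.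
  apply IHd. intros; apply H; lia.
Qed.

(* RInt is 0 on non-integrable functions, so linearity and monotonicity of
   box_int need every inner integral to exist. *)
Fixpoint box_integrable (d : nat) (l u : pt) (f : pt -> R) (x : pt) : Prop :=
  match d with
  | O => True
  | S d' => inhabited (Riemann_integrable (fun t => box_int d' l u f (upd x d' t)) (l d') (u d')) /\
            forall t, l d' <= t <= u d' -> box_integrable d' l u f (upd x d' t)
  end.

Section BoxIntegral.
Variable p : nat.
Variables l u : pt.
Hypothesis hlu : forall i, (i < p)%nat -> l i <= u i.

Lemma box_int_plus_scal : forall d f g c x, (d <= p)%nat ->
  box_integrable d l u f x -> box_integrable d l u g x ->
  box_int d l u (fun y => f y + c * g y) x = box_int d l u f x + c * box_int d l u g x /\
  box_integrable d l u (fun y => f y + c * g y) x.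
Proof.
  induction d; intros f g c x hd hf hg; simpl; [split; auto|].
  destruct hf as [[if1] hf]; destruct hg as [[ig1] hg].
  assert (hle : l d <= u d) by (apply hlu; lia).
  assert (E : forall t, l d <= t <= u d ->
     box_int d l u (fun y => f y + c * g y) (upd x d t) =
     box_int d l u f (upd x d t) + c * box_int d l u g (upd x d t))
    by (intros; apply IHd; auto; lia).
  assert (I : Riemann_integrable
                (fun t => box_int d l u (fun y => f y + c * g y) (upd x d t)) (l d) (u d)).
  { apply Riemann_integrable_ext
      with (f := fun t => box_int d l u f (upd x d t) + c * box_int d l u g (upd x d t)).
    - intros t ht. rewrite Rmin_left in ht by auto; rewrite Rmax_right in ht by auto.
      rewrite E; auto.
    - apply RiemannInt_P10; auto. }
  split.
  - rewrite (RInt_ext _ (fun t => box_int d l u f (upd x d t) + c * box_int d l u g (upd x d t))); auto.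
    apply RInt_plus_scal; auto.
  - split; [constructor; auto|]. intros; apply IHd; auto; lia.
Qed.

Lemma box_int_plus : forall d f g x, (d <= p)%nat ->
  box_integrable d l u f x -> box_integrable d l u g x ->
  box_int d l u (fun y => f y + g y) x = box_int d l u f x + box_int d l u g x.
Proof.
  intros. replace (fun y => f y + g y) with (fun y => f y + 1 * g y)
    by (apply functional_extensionality; intros; ring).
  rewrite (proj1 (box_int_plus_scal d f g 1 x H H0 H1)); ring.
Qed.

Lemma box_int_zero : forall d x, (d <= p)%nat ->
  box_int d l u (fun _ => 0) x = 0 /\ box_integrable d l u (fun _ => 0) x.
Proof.
  induction d; intros x hd; simpl; [split; auto|].
  assert (F : (fun t => box_int d l u (fun _ => 0) (upd x d t)) = (fun _ => 0))
    by (apply functional_extensionality; intros; apply IHd; lia).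
  rewrite F. split; [apply RInt_zero|].
  split; [constructor; apply RiemannInt_P14|]. intros; apply IHd; lia.
Qed.

Lemma box_int_ext : forall d f g x, (d <= p)%nat -> (forall y, box p l u y -> f y = g y) ->
  box p l u x -> box_int d l u f x = box_int d l u g x.
Proof.
  induction d; intros f g x hd H hx; simpl; auto.
  apply RInt_ext; [apply hlu; lia|].
  intros t ht. apply IHd; auto; [lia|]. apply box_upd; auto; lia.
Qed.

Lemma box_int_le : forall d f g x, (d <= p)%nat ->
  box_integrable d l u f x -> box_integrable d l u g x -> box p l u x ->
  (forall y, box p l u y -> f y <= g y) -> box_int d l u f x <= box_int d l u g x.
Proof.
  induction d; intros f g x hd hf hg hx H; simpl; auto.
  destruct hf as [[if1] hf]; destruct hg as [[ig1] hg].
  assert (hle : l d <= u d) by (apply hlu; lia).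
  apply RInt_le; auto.
  intros t ht. apply IHd; auto; [lia|]. apply box_upd; auto; lia.
Qed.

Lemma cont_on_line : forall h x i, cont_within p (box p l u) h -> box p l u x -> (i < p)%nat ->
  cont_on (l i) (u i) (fun t => h (upd x i t)).
Proof.
  intros h x i hc hx hi t ht eps heps.
  destruct (hc (upd x i t) (box_upd p l u x i t hx hi ht) eps heps) as [d [hd H]].
  exists d; split; auto. intros y hy hyt. apply H; [apply box_upd; auto|].
  intros j hj. unfold upd. destruct (Nat.eqb_spec j i); auto.
  rewrite Rminus_diag, Rabs_R0; auto.
Qed.

Lemma cont_within_uniform_line : forall h x d, cont_within p (box p l u) h ->
  box p l u x -> (d < p)%nat -> forall eps, 0 < eps -> exists delta, 0 < delta /\
    forall t y, l d <= t <= u d -> box p l u y ->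
      (forall i, (i < p)%nat -> Rabs (y i - x i) < delta) ->
      Rabs (h (upd y d t) - h (upd x d t)) < eps.
Proof.
  intros h x d hc hx hd.
  apply (tube_lemma pt (box p l u) (fun de y => forall i, (i < p)%nat -> Rabs (y i - x i) < de)
           (fun t y => h (upd y d t)) x (l d) (u d)); auto.
  - intros d1 d2 y h12 hn i hi. specialize (hn i hi). lra.
  - intros; rewrite Rminus_diag, Rabs_R0; auto.
  - intros t ht e he.
    destruct (hc (upd x d t) (box_upd p l u x d t hx hd ht) e he) as [dd [hdd Hd]].
    exists dd; split; auto. intros t' y ht' htt hy hn.
    apply Hd; [apply box_upd; auto|].
    intros i hi. unfold upd. destruct (Nat.eqb_spec i d); auto.
Qed.

Lemma box_int_cont : forall d f, (d <= p)%nat -> cont_within p (box p l u) f ->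
  cont_within p (box p l u) (box_int d l u f).
Proof.
  induction d; intros f hd hc; simpl; auto.
  assert (IH := IHd f ltac:(lia) hc).
  assert (hle : l d <= u d) by (apply hlu; lia).
  assert (Hint : forall x, box p l u x ->
            Riemann_integrable (fun t => box_int d l u f (upd x d t)) (l d) (u d))
    by (intros x hx; apply cont_on_integrable; auto; apply cont_on_line; auto; lia).
  intros x0 hx0 eps heps.
  set (e' := eps / (u d - l d + 1)).
  assert (he' : 0 < e') by (unfold e'; apply Rdiv_lt_0_compat; lra).
  destruct (cont_within_uniform_line _ x0 d IH hx0 ltac:(lia) e' he') as [de [hde H]].
  exists de; split; auto. intros y hy hn.
  rewrite <- RInt_minus by auto.
  eapply Rle_lt_trans.
  - apply RInt_Rabs_le with (M := e'); [exact hle|apply Riemann_integrable_minus; auto|].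
    intros t ht. left. apply H; auto.
  - assert (e' * (u d - l d + 1) = eps) by (unfold e'; field; lra). nra.
Qed.

Lemma box_integrable_cont : forall d f x, (d <= p)%nat -> cont_within p (box p l u) f ->
  box p l u x -> box_integrable d l u f x.
Proof.
  induction d; intros f x hd hc hx; simpl; auto.
  split.
  - constructor. apply cont_on_integrable; [apply hlu; lia|].
    apply cont_on_line; [apply box_int_cont; auto; lia|auto|lia].
  - intros t ht. apply IHd; auto; [lia|]. apply box_upd; auto; lia.
Qed.

End BoxIntegral.

(** * Continuity and partial derivatives within a set *)

Lemma Rmult_cont_eps : forall a b eps, 0 < eps -> exists eta, 0 < eta /\
  forall a' b', Rabs (a' - a) < eta -> Rabs (b' - b) < eta -> Rabs (a' * b' - a * b) < eps.
Proof.
  intros a b eps he.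
  set (K := Rabs a + Rabs b + 1).
  assert (0 <= Rabs a) by apply Rabs_pos. assert (0 <= Rabs b) by apply Rabs_pos.
  assert (hK : 1 <= K) by (unfold K; lra).
  set (e := Rmin 1 (eps / (2 * K))).
  assert (m1 : e <= 1) by apply Rmin_l.
  assert (m2 : e <= eps / (2 * K)) by apply Rmin_r.
  exists e. split; [apply Rmin_pos; [lra|apply Rdiv_lt_0_compat; lra]|].
  intros a' b' h1 h2.
  replace (a' * b' - a * b) with (a' * (b' - b) + (a' - a) * b) by ring.
  eapply Rle_lt_trans; [apply Rabs_triang|]. rewrite !Rabs_mult.
  assert (Rabs a' <= Rabs a + 1).
  { replace a' with (a + (a' - a)) by ring. eapply Rle_trans; [apply Rabs_triang|]. lra. }
  assert (0 <= Rabs (b' - b)) by apply Rabs_pos. assert (0 <= Rabs (a' - a)) by apply Rabs_pos.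
  assert (Rabs a' * Rabs (b' - b) <= (Rabs a + 1) * e)
    by (apply Rmult_le_compat; auto; try lra; apply Rabs_pos).
  assert (Rabs (a' - a) * Rabs b <= e * Rabs b) by (apply Rmult_le_compat_r; lra).
  assert (e * K <= eps / 2).
  { apply Rle_trans with (eps / (2 * K) * K); [apply Rmult_le_compat_r; lra|].
    right. field. lra. }
  unfold K in *. nra.
Qed.

Section WithinSet.
Variable p : nat.
Variable S : pt -> Prop.

Lemma cont_within_op2 : forall (op : R -> R -> R) f g,
  (forall a b eps, 0 < eps -> exists eta, 0 < eta /\
     forall a' b', Rabs (a' - a) < eta -> Rabs (b' - b) < eta -> Rabs (op a' b' - op a b) < eps) ->
  cont_within p S f -> cont_within p S g -> cont_within p S (fun y => op (f y) (g y)).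
Proof.
  intros op f g hop hf hg x hx eps heps.
  destruct (hop (f x) (g x) eps heps) as [eta [heta H]].
  destruct (hf x hx eta heta) as [d1 [hd1 H1]].
  destruct (hg x hx eta heta) as [d2 [hd2 H2]].
  exists (Rmin d1 d2); split; [apply Rmin_pos; auto|].
  intros y hy hn. apply H.
  - apply H1; auto. intros i hi; eapply Rlt_le_trans; [apply hn; auto|apply Rmin_l].
  - apply H2; auto. intros i hi; eapply Rlt_le_trans; [apply hn; auto|apply Rmin_r].
Qed.

Lemma cont_within_mult : forall f g, cont_within p S f -> cont_within p S g ->
  cont_within p S (fun y => f y * g y).
Proof. intros; apply (cont_within_op2 Rmult); auto. apply Rmult_cont_eps. Qed.

Lemma cont_within_plus : forall f g, cont_within p S f -> cont_within p S g ->
  cont_within p S (fun y => f y + g y).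
Proof.
  intros; apply (cont_within_op2 Rplus); auto. intros a b eps he. exists (eps/2); split; [lra|].
  intros a' b' h1 h2. replace (a' + b' - (a + b)) with ((a' - a) + (b' - b)) by ring.
  eapply Rle_lt_trans; [apply Rabs_triang|]. lra.
Qed.

Lemma cont_within_minus : forall f g, cont_within p S f -> cont_within p S g ->
  cont_within p S (fun y => f y - g y).
Proof.
  intros; apply (cont_within_op2 Rminus); auto. intros a b eps he. exists (eps/2); split; [lra|].
  intros a' b' h1 h2. replace (a' - b' - (a - b)) with ((a' - a) - (b' - b)) by ring.
  eapply Rle_lt_trans; [apply Rabs_triang|]. rewrite Rabs_Ropp. lra.
Qed.

Lemma cont_within_ext : forall f g, (forall y, S y -> f y = g y) ->
  cont_within p S f -> cont_within p S g.
Proof.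
  intros f g E hf x hx eps he. destruct (hf x hx eps he) as [d [hd H]].
  exists d; split; auto. intros y hy hn. rewrite <- !E; auto.
Qed.

Lemma partial_within_limit1_in : forall i g g', partial_within S i g g' <->
  forall x, S x -> limit1_in (fun t => (g (upd x i (x i + t)) - g x) / t)
                             (fun t => t <> 0 /\ S (upd x i (x i + t))) (g' x) 0.
Proof.
  intros i g g'. unfold partial_within, limit1_in, limit_in; simpl; unfold R_dist. split.
  - intros H x hx eps he. destruct (H x hx eps he) as [d [hd Hd]].
    exists d; split; [lra|]. intros t [[ht0 hS] hlt]. rewrite Rminus_0_r in hlt. apply Hd; auto.
  - intros H x hx eps he. destruct (H x hx eps he) as [d [hd Hd]].
    exists d; split; [lra|]. intros t ht0 hlt hS. apply Hd. split; auto. rewrite Rminus_0_r; auto.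
Qed.

Lemma limit1_in_ext : forall f1 f2 D l x0, (forall t, D t -> f1 t = f2 t) ->
  limit1_in f1 D l x0 -> limit1_in f2 D l x0.
Proof.
  unfold limit1_in, limit_in; intros f1 f2 D l x0 E H eps he.
  destruct (H eps he) as [a [ha Ha]]. exists a; split; auto.
  intros t ht. rewrite <- E by apply ht. apply Ha; auto.
Qed.

Lemma partial_within_plus : forall i f f' g g',
  partial_within S i f f' -> partial_within S i g g' ->
  partial_within S i (fun y => f y + g y) (fun y => f' y + g' y).
Proof.
  intros i f f' g g' hf hg. rewrite partial_within_limit1_in in *. intros x hx.
  eapply limit1_in_ext; [|apply limit_plus; [apply hf|apply hg]; auto].
  intros t [ht _]. simpl. field; auto.
Qed.

(* (fg)(x+t) - (fg)(x) = (f(x+t) - f(x)) g(x+t) + f(x) (g(x+t) - g(x)), and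
   g(x+t) = g(x) + t * (difference quotient of g) tends to g(x). *)
Lemma partial_within_mult : forall i f f' g g',
  partial_within S i f f' -> partial_within S i g g' ->
  partial_within S i (fun y => f y * g y) (fun y => f' y * g y + f y * g' y).
Proof.
  intros i f f' g g' hf hg. rewrite partial_within_limit1_in in *. intros x hx.
  set (D := fun t => t <> 0 /\ S (upd x i (x i + t))).
  assert (L1 : limit1_in (fun t => g x + t * ((g (upd x i (x i + t)) - g x) / t)) D
                         (g x + 0 * g' x) 0).
  { apply limit_plus; [exact (limit_free (fun _ => g x) _ 0 0)|].
    apply limit_mul; [apply lim_x|apply hg; auto]. }
  assert (L2 := limit_mul _ _ _ _ _ _ (hf x hx) L1).
  assert (L3 := limit_plus _ _ _ _ _ _ L2
                  (limit_mul _ _ _ _ _ _ (limit_free (fun _ => f x) D 0 0) (hg x hx))).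
  replace (f' x * g x + f x * g' x) with (f' x * (g x + 0 * g' x) + f x * g' x) by ring.
  eapply limit1_in_ext; [|apply L3].
  intros t [ht _]. simpl. field; auto.
Qed.

Lemma partial_within_const : forall i c, partial_within S i (fun _ => c) (fun _ => 0).
Proof.
  intros i c x hx eps he. exists 1; split; [lra|]. intros.
  replace ((c - c) / t - 0) with 0 by (field; auto). rewrite Rabs_R0; auto.
Qed.

Lemma partial_within_ext : forall i f f' g g',
  (forall y, S y -> f y = g y) -> (forall y, S y -> f' y = g' y) ->
  partial_within S i f f' -> partial_within S i g g'.
Proof.
  intros i f f' g g' E E' H x hx eps he. destruct (H x hx eps he) as [d [hd Hd]].
  exists d; split; auto. intros t h0 ht hS. rewrite <- !E, <- E'; auto.
Qed.

Lemma partial_within_minus : forall i f f' g g',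
  partial_within S i f f' -> partial_within S i g g' ->
  partial_within S i (fun y => f y - g y) (fun y => f' y - g' y).
Proof.
  intros. apply partial_within_ext
    with (f := fun y => f y + (-1) * g y) (f' := fun y => f' y + (0 * g y + (-1) * g' y)).
  - intros; ring.
  - intros; ring.
  - apply partial_within_plus; auto.
    apply partial_within_mult; auto. apply partial_within_const.
Qed.

End WithinSet.

Lemma RInt_diff_quotient : forall A B C a b s,
  Riemann_integrable A a b -> Riemann_integrable B a b -> Riemann_integrable C a b ->
  (RInt A a b - RInt B a b) / s - RInt C a b = RInt (fun t => / s * (A t - B t) - C t) a b.
Proof.
  intros. rewrite RInt_minus, RInt_scal, RInt_minus; auto.
  - unfold Rdiv; ring.
  - apply Riemann_integrable_minus; auto.
  - apply Riemann_integrable_scal, Riemann_integrable_minus; auto.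
Qed.

Section DerivUnderIntegral.
Variable p : nat.
Variables l u : pt.
Hypothesis hlu : forall i, (i < p)%nat -> l i <= u i.

Lemma partial_within_derivable_pt_lim : forall H H' y j w0,
  partial_within (box p l u) j H H' -> box p l u y -> (j < p)%nat -> l j < w0 < u j ->
  derivable_pt_lim (fun w => H (upd y j w)) w0 (H' (upd y j w0)).
Proof.
  intros H H' y j w0 hpw hy hj hw eps he.
  assert (hz : box p l u (upd y j w0)) by (apply box_upd; auto; lra).
  destruct (hpw _ hz eps he) as [d [hd Hd]].
  assert (hp : 0 < Rmin d (Rmin (w0 - l j) (u j - w0))) by (repeat apply Rmin_pos; lra).
  exists (mkposreal _ hp). intros h h0 hh. simpl in hh.
  assert (m1 := Rmin_l d (Rmin (w0 - l j) (u j - w0))).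
  assert (m2 := Rmin_r d (Rmin (w0 - l j) (u j - w0))).
  assert (m3 := Rmin_l (w0 - l j) (u j - w0)). assert (m4 := Rmin_r (w0 - l j) (u j - w0)).
  specialize (Hd h h0 ltac:(lra)). rewrite upd_same, upd_upd in Hd. apply Hd.
  apply box_upd; auto. unfold Rabs in hh; destruct Rcase_abs in hh; lra.
Qed.

Lemma box_diff_quotient_MVT : forall H H' y j s,
  cont_within p (box p l u) H -> partial_within (box p l u) j H H' ->
  box p l u y -> (j < p)%nat -> s <> 0 -> l j <= y j + s <= u j ->
  exists c, Rabs (c - y j) < Rabs s /\ l j <= c <= u j /\
            (H (upd y j (y j + s)) - H y) / s = H' (upd y j c).
Proof.
  intros H H' y j s hc hpw hy hj hs hys.
  set (psi := fun w => H (upd y j w)).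
  assert (hyj := proj1 (hy j) hj).
  assert (cpsi : cont_on (l j) (u j) psi) by (apply (cont_on_line p l u); auto).
  assert (dpsi : forall a b, l j <= a -> b <= u j -> has_deriv_on a b psi (fun w => H' (upd y j w)))
    by (intros a b ha hb w hw; apply partial_within_derivable_pt_lim; auto; lra).
  replace (H y) with (psi (y j)) by (unfold psi; rewrite upd_id; auto).
  change (H (upd y j (y j + s))) with (psi (y j + s)).
  destruct (Rlt_dec 0 s) as [sp|sn].
  - destruct (MVT_cont_on (y j) (y j + s) psi (fun w => H' (upd y j w))) as [c [hc' E]];
      [lra|eapply cont_on_sub; [| |apply cpsi]; lra|apply dpsi; lra|].
    exists c. split; [unfold Rabs; repeat destruct Rcase_abs; lra|]. split; [lra|].
    rewrite E. field. auto.
  - destruct (MVT_cont_on (y j + s) (y j) psi (fun w => H' (upd y j w))) as [c [hc' E]];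
      [lra|eapply cont_on_sub; [| |apply cpsi]; lra|apply dpsi; lra|].
    exists c. split; [unfold Rabs; repeat destruct Rcase_abs; lra|]. split; [lra|].
    replace (psi (y j + s) - psi (y j)) with (- (psi (y j) - psi (y j + s))) by ring.
    rewrite E. field. auto.
Qed.

(* Differentiation under the integral sign with respect to an outer variable
   x_j: by the mean value theorem the difference quotient of the inner integrand
   is a value of its derivative at a nearby point, which is close to its value
   at x uniformly in the integration variable. *)
Lemma partial_within_box_int : forall d j f f', (d <= j)%nat -> (j < p)%nat ->
  cont_within p (box p l u) f -> cont_within p (box p l u) f' ->
  partial_within (box p l u) j f f' ->
  partial_within (box p l u) j (box_int d l u f) (box_int d l u f').
Proof.
  induction d; intros j f f' hdj hj hcf hcf' hpw; simpl; auto.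
  assert (IH := IHd j f f' ltac:(lia) hj hcf hcf' hpw).
  assert (cH := box_int_cont p l u hlu d f ltac:(lia) hcf).
  assert (cH' := box_int_cont p l u hlu d f' ltac:(lia) hcf').
  set (H := box_int d l u f) in *. set (H' := box_int d l u f') in *.
  assert (hdp : (d < p)%nat) by lia. assert (hjd : j <> d) by lia.
  assert (hle : l d <= u d) by (apply hlu; lia).
  intros x hx eps heps.
  set (e' := eps / (u d - l d + 1)).
  assert (he' : 0 < e') by (unfold e'; apply Rdiv_lt_0_compat; lra).
  destruct (cont_within_uniform_line p l u hlu H' x d cH' hx hdp e' he') as [de [hde Hde]].
  exists de. split; auto. intros s hs0 hs hxs.
  assert (Ia : forall z, box p l u z -> Riemann_integrable (fun t => H (upd z d t)) (l d) (u d))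
    by (intros; apply cont_on_integrable; auto; apply (cont_on_line p l u); auto).
  assert (Ib : Riemann_integrable (fun t => H' (upd x d t)) (l d) (u d))
    by (apply cont_on_integrable; auto; apply (cont_on_line p l u); auto).
  rewrite RInt_diff_quotient; auto.
  eapply Rle_lt_trans; [apply RInt_Rabs_le with (M := e'); auto|].
  { apply Riemann_integrable_minus; auto.
    apply Riemann_integrable_scal, Riemann_integrable_minus; auto. }
  2: { assert (e' * (u d - l d + 1) = eps) by (unfold e'; field; lra). nra. }
  intros t ht.
  set (y := upd x d t).
  assert (hy : box p l u y) by (apply box_upd; auto).
  assert (hyj : y j = x j) by (apply upd_other; auto).
  assert (hxsj := proj1 (hxs j) hj). rewrite upd_same in hxsj.
  destruct (box_diff_quotient_MVT H H' y j s) as [c [hc1 [hc2 hc3]]]; auto; [lra|].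
  replace (upd (upd x j (x j + s)) d t) with (upd y j (y j + s))
    by (rewrite hyj; unfold y; apply upd_comm; auto).
  replace (/ s * (H (upd y j (y j + s)) - H y)) with ((H (upd y j (y j + s)) - H y) / s)
    by (unfold Rdiv; ring).
  rewrite hc3. left.
  replace (upd y j c) with (upd (upd x j c) d t) by (unfold y; apply upd_comm; auto).
  apply Hde; auto; [apply box_upd; auto|].
  intros i hi. unfold upd. destruct (Nat.eqb_spec i j); [subst; rewrite <- hyj; lra|].
  rewrite Rminus_diag, Rabs_R0; auto.
Qed.

End DerivUnderIntegral.

(** * Sums over the cells of the grid and polynomial pieces *)

Definition mi_set (c : mi) (d j : nat) : mi := fun i => if Nat.eqb i d then j else c i.

Lemma is_cell_mi_set : forall d N c j, is_cell d N c -> (j < N d)%nat ->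
  is_cell (S d) N (mi_set c d j).
Proof.
  intros d N c j hc hj i. unfold mi_set. destruct (Nat.eqb_spec i d).
  - subst; split; intros; auto; lia.
  - destruct (hc i) as [h1 h2]. split; intros; [apply h1|apply h2]; lia.
Qed.

Lemma fold_plus_ext : forall (A B : nat -> R) l, (forall j, In j l -> A j = B j) ->
  fold_right Rplus 0 (map A l) = fold_right Rplus 0 (map B l).
Proof. intros. f_equal. apply map_ext_in. auto. Qed.

Lemma fold_plus_app : forall (A : nat -> R) l1 l2,
  fold_right Rplus 0 (map A (l1 ++ l2)) =
  fold_right Rplus 0 (map A l1) + fold_right Rplus 0 (map A l2).
Proof. intros; induction l1; simpl; [ring|]. rewrite IHl1; ring. Qed.

Lemma fold_plus_distr : forall (A B : nat -> R) l,
  fold_right Rplus 0 (map (fun j => A j + B j) l) =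
  fold_right Rplus 0 (map A l) + fold_right Rplus 0 (map B l).
Proof. intros; induction l; simpl; [ring|]. rewrite IHl; ring. Qed.

Lemma fold_plus_rel : forall (Rl : R -> R -> Prop), Rl 0 0 ->
  (forall a b a' b', Rl a b -> Rl a' b' -> Rl (a + a') (b + b')) ->
  forall (A B : nat -> R) l, (forall j, In j l -> Rl (A j) (B j)) ->
  Rl (fold_right Rplus 0 (map A l)) (fold_right Rplus 0 (map B l)).
Proof.
  intros Rl h0 hp A B l. induction l; simpl; intros H; [auto|].
  apply hp; [apply H; auto|apply IHl; auto].
Qed.

Lemma msum_rel : forall (Rl : R -> R -> Prop), Rl 0 0 ->
  (forall a b a' b', Rl a b -> Rl a' b' -> Rl (a + a') (b + b')) ->
  forall d N F G, (forall c, is_cell d N c -> Rl (F c) (G c)) -> Rl (msum d N F) (msum d N G).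
Proof.
  intros Rl h0 hplus. induction d; intros N F G H; simpl.
  - apply H. intros i; split; intros; [lia|reflexivity].
  - apply fold_plus_rel; auto. intros j hj. apply in_seq in hj.
    apply IHd. intros c hc. apply (H (mi_set c d j)). apply is_cell_mi_set; auto; lia.
Qed.

Lemma msum_ext : forall d N F G, (forall c, is_cell d N c -> F c = G c) ->
  msum d N F = msum d N G.
Proof. intros. apply msum_rel; auto. intros; subst; auto. Qed.

Lemma msum_le : forall d N F G, (forall c, is_cell d N c -> F c <= G c) ->
  msum d N F <= msum d N G.
Proof. intros. apply msum_rel; auto; intros; lra. Qed.

Lemma msum_zero : forall d N, msum d N (fun _ => 0) = 0.
Proof.
  induction d; intros; simpl; auto.
  induction (seq 0 (N d)); simpl; auto. rewrite IHl, IHd; ring.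
Qed.

Lemma msum_eq0 : forall d N F, (forall c, is_cell d N c -> F c = 0) -> msum d N F = 0.
Proof. intros. rewrite <- (msum_zero d N). apply msum_ext; auto. Qed.

Lemma msum_plus : forall d N F G, msum d N (fun c => F c + G c) = msum d N F + msum d N G.
Proof.
  induction d; intros; simpl; auto.
  rewrite <- fold_plus_distr. f_equal. apply map_ext. intros; apply IHd.
Qed.

Lemma msum_fold_plus : forall d N (F : mi -> nat -> R) l,
  msum d N (fun c => fold_right Rplus 0 (map (fun j => F c j) l)) =
  fold_right Rplus 0 (map (fun j => msum d N (fun c => F c j)) l).
Proof.
  intros d N F l. induction l; simpl; [apply msum_zero|].
  rewrite msum_plus, IHl. auto.
Qed.

Lemma partial_within_fold_plus : forall U i (A A' : nat -> pt -> R) l,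
  (forall j, In j l -> partial_within U i (A j) (A' j)) ->
  partial_within U i (fun x => fold_right Rplus 0 (map (fun j => A j x) l))
                     (fun x => fold_right Rplus 0 (map (fun j => A' j x) l)).
Proof.
  intros U i A A' l. induction l; intros H; simpl; [apply partial_within_const|].
  apply (partial_within_plus U i (A a) (A' a)); [apply H; simpl; auto|].
  apply IHl; intros; apply H; simpl; auto.
Qed.

Lemma partial_within_msum : forall U i d N (F F' : mi -> pt -> R),
  (forall c, partial_within U i (F c) (F' c)) ->
  partial_within U i (fun x => msum d N (fun c => F c x)) (fun x => msum d N (fun c => F' c x)).
Proof.
  intros U i. induction d; intros N F F' H; simpl; auto.
  apply (partial_within_fold_plus U i
    (fun j x => msum d N (fun c => F (mi_set c d j) x))
    (fun j x => msum d N (fun c => F' (mi_set c d j) x))).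
  intros j _. apply IHd. auto.
Qed.

Lemma fold_mult_init : forall l c, fold_right Rmult c l = fold_right Rmult 1 l * c.
Proof. induction l; intros; simpl; [ring|]. rewrite IHl; ring. Qed.

Lemma mprod_S : forall p F, mprod (S p) F = mprod p F * F p.
Proof.
  intros. unfold mprod. rewrite seq_S, map_app, fold_right_app. simpl.
  rewrite fold_mult_init. ring.
Qed.

Lemma mprod_ext : forall p F G, (forall j, (j < p)%nat -> F j = G j) -> mprod p F = mprod p G.
Proof. induction p; intros; auto. rewrite !mprod_S, (IHp F G), H; auto. Qed.

Lemma mprod_split : forall p F i, (i < p)%nat ->
  mprod p F = F i * mprod p (fun j => if Nat.eqb j i then 1 else F j).
Proof.
  induction p; intros F i hi; [lia|]. rewrite !mprod_S.
  destruct (Nat.eqb_spec p i).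
  - subst. rewrite (mprod_ext i (fun j => if Nat.eqb j i then 1 else F j) F); [ring|].
    intros j hj. destruct (Nat.eqb_spec j i); auto; lia.
  - rewrite (IHp F i) by lia. ring.
Qed.

Lemma mprod_eq0 : forall p F i, (i < p)%nat -> F i = 0 -> mprod p F = 0.
Proof. intros. rewrite (mprod_split p F i), H0; auto; ring. Qed.

Fixpoint ffact (m a : nat) : R := match a with O => 1 | S a' => ffact m a' * INR (m - a') end.

Lemma ffact_eq0 : forall m a, (m < a)%nat -> ffact m a = 0.
Proof.
  intros m a; induction a; intros h; [lia|]. simpl.
  destruct (Nat.eq_dec m a).
  - subst. rewrite Nat.sub_diag; simpl; ring.
  - rewrite IHa by lia; ring.
Qed.

Definition poly_deriv (p n : nat) (coef : mi -> R) (al : mi) (x : pt) : R :=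
  msum p (fun _ => S n)
    (fun g => coef g * mprod p (fun j => ffact (g j) (al j) * x j ^ (g j - al j))).

Lemma partial_within_line : forall U i g g',
  (forall x, U x -> exists K h L, (forall s, g (upd x i s) = K * h s) /\ g' x = K * L /\
      derivable_pt_lim h (x i) L) ->
  partial_within U i g g'.
Proof.
  intros U i g g' H x hx eps he.
  destruct (H x hx) as [K [h [L [E1 [E2 E3]]]]].
  assert (0 <= Rabs K) by apply Rabs_pos.
  assert (he' : 0 < eps / (Rabs K + 1)) by (apply Rdiv_lt_0_compat; lra).
  destruct (E3 _ he') as [d hd].
  exists d; split; [apply cond_pos|]. intros t h0 ht _.
  rewrite E1, E2. rewrite <- (upd_id x i) at 2. rewrite E1.
  replace ((K * h (x i + t) - K * h (x i)) / t - K * L)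
    with (K * ((h (x i + t) - h (x i)) / t - L)) by (field; auto).
  rewrite Rabs_mult. specialize (hd t h0 ht).
  apply Rle_lt_trans with (Rabs K * (eps / (Rabs K + 1))); [apply Rmult_le_compat_l; lra|].
  apply Rlt_le_trans with ((Rabs K + 1) * (eps / (Rabs K + 1))); [nra|].
  right; field; lra.
Qed.

Lemma partial_within_poly_deriv : forall U p n coef al i, (i < p)%nat ->
  partial_within U i (poly_deriv p n coef al) (poly_deriv p n coef (incr al i)).
Proof.
  intros U p n coef al i hi. unfold poly_deriv.
  apply (partial_within_msum U i p (fun _ => S n)
    (fun g x => coef g * mprod p (fun j => ffact (g j) (al j) * x j ^ (g j - al j)))
    (fun g x => coef g * mprod p (fun j => ffact (g j) (incr al i j) * x j ^ (g j - incr al i j)))).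
  intros g. apply partial_within_line. intros x hx.
  set (C := mprod p (fun j => if Nat.eqb j i then 1 else ffact (g j) (al j) * x j ^ (g j - al j))).
  exists (coef g * C), (fun s => ffact (g i) (al i) * s ^ (g i - al i)),
         (ffact (g i) (al i) * (INR (g i - al i) * x i ^ pred (g i - al i))).
  split; [|split].
  - intros s. rewrite (mprod_split p _ i hi), upd_same. unfold C.
    rewrite (mprod_ext p
      (fun j => if Nat.eqb j i then 1 else ffact (g j) (al j) * upd x i s j ^ (g j - al j))
      (fun j => if Nat.eqb j i then 1 else ffact (g j) (al j) * x j ^ (g j - al j))); [ring|].
    intros j hj. destruct (Nat.eqb_spec j i); auto. rewrite upd_other; auto.
  - rewrite (mprod_split p _ i hi). unfold C.
    rewrite (mprod_ext p
      (fun j => if Nat.eqb j i then 1 else ffact (g j) (incr al i j) * x j ^ (g j - incr al i j))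
      (fun j => if Nat.eqb j i then 1 else ffact (g j) (al j) * x j ^ (g j - al j))).
    + unfold incr. rewrite Nat.eqb_refl. simpl.
      replace (g i - S (al i))%nat with (pred (g i - al i)) by lia. ring.
    + intros j hj. unfold incr. destruct (Nat.eqb_spec j i); auto.
  - apply derivable_pt_lim_scal, derivable_pt_lim_pow.
Qed.

Lemma poly_deriv_high : forall p n coef al i x, (i < p)%nat -> (S n <= al i)%nat ->
  poly_deriv p n coef al x = 0.
Proof.
  intros. unfold poly_deriv. apply msum_eq0. intros g hg.
  rewrite (mprod_eq0 p _ i); auto; [ring|].
  rewrite ffact_eq0; [ring|]. destruct (hg i) as [h _]. specialize (h H). lia.
Qed.

Lemma poly_deriv_mi0 : forall p n coef x,
  poly_deriv p n coef mi0 x = msum p (fun _ => S n) (fun g => coef g * mprod p (fun i => x i ^ g i)).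
Proof.
  intros. unfold poly_deriv. f_equal. apply functional_extensionality; intro g. f_equal.
  apply mprod_ext. intros. unfold mi0; simpl. rewrite Nat.sub_0_r. ring.
Qed.

Inductive reachable (p : nat) : mi -> Prop :=
| reachable_mi0 : reachable p mi0
| reachable_incr : forall al i, reachable p al -> (i < p)%nat -> reachable p (incr al i).

Definition mi_add (al : mi) (i m : nat) : mi :=
  fun j => if Nat.eqb j i then (al j + m)%nat else al j.

Lemma mi_add_0 : forall al i, mi_add al i 0 = al.
Proof.
  intros; apply functional_extensionality; intro j; unfold mi_add.
  destruct (Nat.eqb_spec j i); auto.
Qed.

Lemma mi_add_S : forall al i m, mi_add al i (S m) = incr (mi_add al i m) i.
Proof.
  intros; apply functional_extensionality; intro j; unfold mi_add, incr.
  destruct (Nat.eqb_spec j i); auto; lia.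
Qed.

Lemma reachable_mi_add : forall p al i m, reachable p al -> (i < p)%nat -> reachable p (mi_add al i m).
Proof. induction m; intros; [rewrite mi_add_0|rewrite mi_add_S; constructor]; auto. Qed.

Lemma reachable_support : forall p al, (forall i, (p <= i)%nat -> al i = 0%nat) -> reachable p al.
Proof.
  intros p al. enough (forall d, (d <= p)%nat -> (forall i, (d <= i)%nat -> al i = 0%nat) -> reachable p al)
    by (intros; apply (H p); auto).
  intros d; revert al. induction d; intros al hd H.
  - replace al with mi0; [constructor|].
    apply functional_extensionality; intro; symmetry; apply H; lia.
  - set (al' := mi_set al d 0).
    replace al with (mi_add al' d (al d)).
    + apply reachable_mi_add; [|lia]. apply IHd; [lia|].
      intros i hi. unfold al', mi_set. destruct (Nat.eqb_spec i d); auto. apply H; lia.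
    + apply functional_extensionality; intro j; unfold mi_add, al', mi_set.
      destruct (Nat.eqb_spec j d); subst; auto.
Qed.

Lemma Rabs_lt_eps_eq : forall a b, (forall eps, 0 < eps -> Rabs (a - b) < eps) -> a = b.
Proof.
  intros a b H. destruct (Req_dec a b) as [|hne]; auto. exfalso.
  assert (hpos : 0 < Rabs (a - b)) by (apply Rabs_pos_lt; lra).
  specialize (H _ hpos). lra.
Qed.

Section PolynomialPieces.
Variable p : nat.
Variables l u : pt.
Hypothesis hlt : forall i, (i < p)%nat -> l i < u i.

(* The box is non-degenerate, so every point can be moved along x_j by small
   (one-sided) increments; this pins down the limit of the difference quotient. *)
Lemma partial_within_unique : forall j g g1 g2 x, (j < p)%nat ->
  partial_within (box p l u) j g g1 -> partial_within (box p l u) j g g2 -> box p l u x ->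
  g1 x = g2 x.
Proof.
  intros j g g1 g2 x hj h1 h2 hx. apply Rabs_lt_eps_eq. intros eps he.
  destruct (h1 x hx (eps/2) ltac:(lra)) as [d1 [hd1 H1]].
  destruct (h2 x hx (eps/2) ltac:(lra)) as [d2 [hd2 H2]].
  assert (hxj := proj1 (hx j) hj). assert (hl := hlt j hj).
  set (m := Rmin (Rmin d1 d2) (u j - l j)).
  assert (hm : 0 < m) by (unfold m; repeat apply Rmin_pos; lra).
  assert (m1 : m <= Rmin d1 d2) by apply Rmin_l. assert (m2 : m <= u j - l j) by apply Rmin_r.
  assert (m3 : Rmin d1 d2 <= d1) by apply Rmin_l. assert (m4 : Rmin d1 d2 <= d2) by apply Rmin_r.
  assert (T : exists t, t <> 0 /\ Rabs t < d1 /\ Rabs t < d2 /\ box p l u (upd x j (x j + t))).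
  { destruct (Rlt_dec (x j) (u j)) as [hu|hu].
    - exists (Rmin (m/2) (u j - x j)).
      assert (r1 := Rmin_l (m/2) (u j - x j)). assert (r2 := Rmin_r (m/2) (u j - x j)).
      assert (0 < Rmin (m/2) (u j - x j)) by (apply Rmin_pos; lra).
      rewrite Rabs_right by lra. split; [lra|split; [lra|split; [lra|]]].
      apply box_upd; auto; lra.
    - exists (- (m/2)). rewrite Rabs_Ropp, Rabs_right by lra.
      split; [lra|split; [lra|split; [lra|]]].
      apply box_upd; auto; lra. }
  destruct T as [t [t0 [t1 [t2 t3]]]].
  specialize (H1 t t0 t1 t3). specialize (H2 t t0 t2 t3).
  set (q := (g (upd x j (x j + t)) - g x) / t) in *.
  replace (g1 x - g2 x) with (- (q - g1 x) + (q - g2 x)) by ring.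
  eapply Rle_lt_trans; [apply Rabs_triang|]. rewrite Rabs_Ropp. lra.
Qed.

Lemma smooth_on_poly_deriv : forall n coef P DP, smooth_on p (box p l u) P DP ->
  (forall x, box p l u x -> P x = poly_deriv p n coef mi0 x) ->
  forall al, reachable p al -> forall x, box p l u x -> DP al x = poly_deriv p n coef al x.
Proof.
  intros n coef P DP [s1 [s2 s3]] hP al hr. induction hr; intros x hx.
  - rewrite s1; auto.
  - apply (partial_within_unique i (DP al)); auto.
    apply partial_within_ext with (f := poly_deriv p n coef al) (f' := poly_deriv p n coef (incr al i)).
    + intros; symmetry; auto.
    + intros; auto.
    + apply partial_within_poly_deriv; auto.
Qed.

End PolynomialPieces.

(** * Orthogonality on a single cell *)

Lemma alternating_zero : forall (Q : nat -> R) n,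
  (forall m, (m < n)%nat -> Q m = - Q (S m)) -> Q n = 0 -> Q O = 0.
Proof.
  intros Q n HS Hn.
  enough (H : forall j, (j <= n)%nat -> Q (n - j)%nat = 0)
    by (rewrite <- (Nat.sub_diag n); apply H; auto).
  induction j; intros hj; [rewrite Nat.sub_0_r; auto|].
  rewrite HS by lia. replace (S (n - S j)) with (n - j)%nat by lia.
  rewrite IHj by lia. ring.
Qed.

Section CellOrthogonality.
Variable p : nat.
Variables l u : pt.
Hypothesis hlt : forall i, (i < p)%nat -> l i < u i.
Variable k : nat.
Variables DH DS : mi -> pt -> R.
Hypothesis cont_DH : forall al, cont_within p (box p l u) (DH al).
Hypothesis partial_DH : forall al i, (i < p)%nat ->
  partial_within (box p l u) i (DH al) (DH (incr al i)).
Hypothesis cont_DS : forall al, cont_within p (box p l u) (DS al).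
Hypothesis partial_DS : forall al i, (i < p)%nat ->
  partial_within (box p l u) i (DS al) (DS (incr al i)).
Hypothesis DH_high : forall al, reachable p al -> forall i, (i < p)%nat -> (2 * k + 2 <= al i)%nat ->
  forall x, box p l u x -> DH al x = 0.
Hypothesis DS_DH_vertex : forall g x, mi_le p k g -> box p l u x ->
  (forall i, (i < p)%nat -> x i = l i \/ x i = u i) -> DS g x = DH g x.

Let hlu : forall i, (i < p)%nat -> l i <= u i.
Proof. intros; apply Rlt_le, hlt; auto. Qed.

Definition cross (a g : mi) (y : pt) : R := DH a y * (DS g y - DH g y).

Lemma cont_within_cross : forall a g, cont_within p (box p l u) (cross a g).
Proof.
  intros. apply cont_within_mult; auto. apply cont_within_minus; auto.
Qed.

Lemma partial_within_cross : forall a g i, (i < p)%nat ->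
  partial_within (box p l u) i (cross a g) (fun y => cross (incr a i) g y + cross a (incr g i) y).
Proof.
  intros. apply partial_within_ext with (f := cross a g)
    (f' := fun y => DH (incr a i) y * (DS g y - DH g y) +
                    DH a y * (DS (incr g i) y - DH (incr g i) y)); auto.
  apply partial_within_mult; auto. apply partial_within_minus; auto.
Qed.

Lemma cross_int_by_parts : forall d a g x, (d < p)%nat -> box p l u x ->
  RInt (fun t => box_int d l u (cross a (incr g d)) (upd x d t)) (l d) (u d) =
  box_int d l u (cross a g) (upd x d (u d)) - box_int d l u (cross a g) (upd x d (l d)) -
  RInt (fun t => box_int d l u (cross (incr a d) g) (upd x d t)) (l d) (u d).
Proof.
  intros d a g x hdp hx.
  assert (hle := hlu d hdp).
  set (F' := fun y => cross (incr a d) g y + cross a (incr g d) y).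
  assert (cF' : cont_within p (box p l u) F') by (apply cont_within_plus; apply cont_within_cross).
  assert (cI : forall f, cont_within p (box p l u) f ->
                 cont_on (l d) (u d) (fun t => box_int d l u f (upd x d t)))
    by (intros; apply (cont_on_line p l u); auto; apply box_int_cont; auto; lia).
  assert (FT : RInt (fun t => box_int d l u F' (upd x d t)) (l d) (u d) =
     box_int d l u (cross a g) (upd x d (u d)) - box_int d l u (cross a g) (upd x d (l d))).
  { apply (RInt_deriv (l d) (u d) (fun t => box_int d l u (cross a g) (upd x d t)));
      [apply hlt; auto|apply cI, cont_within_cross| |apply cI; auto].
    intros w hw. apply (partial_within_derivable_pt_lim p l u); auto.
    apply partial_within_box_int; auto; [apply cont_within_cross|apply partial_within_cross; auto]. }
  rewrite (RInt_ext _ (fun t => box_int d l u (cross (incr a d) g) (upd x d t) +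
                                box_int d l u (cross a (incr g d)) (upd x d t))) in FT; auto.
  - rewrite RInt_plus in FT; [lra| |]; apply cont_on_integrable; auto; apply cI, cont_within_cross.
  - intros t ht. apply (box_int_plus p l u hlu); [lia| |];
      apply (box_integrable_cont p l u hlu); [lia|apply cont_within_cross|apply box_upd; auto
                                             |lia|apply cont_within_cross|apply box_upd; auto].
Qed.

(* The multi-indices a (derivative on H) and g (derivative on e = psi - H) after
   the first d coordinates have been fully integrated by parts. *)
Definition cross_index (d : nat) (a g : mi) : Prop :=
  reachable p a /\
  (forall i, (i < d)%nat -> (k + 1 <= a i)%nat) /\
  (forall i, (i < d)%nat -> g i = (k + 1)%nat) /\
  (forall i, (d <= i)%nat -> (i < p)%nat -> (g i <= k)%nat) /\
  (forall i, (p <= i)%nat -> g i = 0%nat).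

Definition on_faces (d : nat) (x : pt) : Prop :=
  forall i, (d <= i)%nat -> (i < p)%nat -> x i = l i \/ x i = u i.

Lemma cross_index_shift : forall d a g m, (d < p)%nat -> (m <= k)%nat ->
  cross_index (S d) a g -> cross_index d (mi_add a d m) (mi_set g d (k - m)).
Proof.
  intros d a g m hdp hm [ha [hak [hgk [hgl hg0]]]]. unfold mi_add, mi_set.
  repeat split.
  - apply reachable_mi_add; auto.
  - intros i hi. destruct (Nat.eqb_spec i d); [lia|]. apply hak; lia.
  - intros i hi. destruct (Nat.eqb_spec i d); [lia|]. apply hgk; lia.
  - intros i hi1 hi2. destruct (Nat.eqb_spec i d); [lia|]. apply hgl; lia.
  - intros i hi. destruct (Nat.eqb_spec i d); [lia|]. apply hg0; lia.
Qed.

Lemma on_faces_upd : forall d x t, on_faces (S d) x -> t = l d \/ t = u d ->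
  on_faces d (upd x d t).
Proof.
  intros d x t hv ht i hi1 hi2. unfold upd. destruct (Nat.eqb_spec i d); [subst; auto|].
  apply hv; lia.
Qed.

(* Induction on the number d of integrations: in direction d, moving the k+1
   derivatives of e onto H one at a time (integration by parts, boundary terms
   vanishing by induction) reaches a derivative of H of order >= 2k+2 in x_d. *)
Lemma cross_term_vanishes : forall d, (d <= p)%nat -> forall x a g,
  box p l u x -> on_faces d x -> cross_index d a g -> box_int d l u (cross a g) x = 0.
Proof.
  induction d; intros hd x a g hx hv hag; simpl.
  - destruct hag as [_ [_ [_ [hgl hg0]]]].
    unfold cross. rewrite DS_DH_vertex; [ring| | |]; auto.
    + intros i; split; intros; [apply hgl; lia|apply hg0; auto].
    + intros; apply hv; auto; lia.
  - assert (hdp : (d < p)%nat) by lia.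
    assert (hle := hlu d hdp).
    set (Q := fun m => RInt (fun t => box_int d l u
                (cross (mi_add a d m) (mi_set g d (k + 1 - m))) (upd x d t)) (l d) (u d)).
    assert (Qshift : forall m, (m < k + 1)%nat -> Q m = - Q (S m)).
    { intros m hm. unfold Q.
      replace (mi_set g d (k + 1 - m)) with (incr (mi_set g d (k - m)) d)
        by (apply functional_extensionality; intro i; unfold incr, mi_set;
            destruct (Nat.eqb_spec i d); auto; lia).
      replace (mi_set g d (k + 1 - S m)) with (mi_set g d (k - m)) by (f_equal; lia).
      rewrite mi_add_S, cross_int_by_parts by auto.
      assert (hag' := cross_index_shift d a g m hdp ltac:(lia) hag).
      rewrite !IHd; [ring|..]; try lia; auto.
      all: solve [apply box_upd; auto; lra | apply on_faces_upd; auto]. }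
    assert (Qlast : Q (k + 1)%nat = 0).
    { unfold Q. rewrite <- (RInt_zero (l d) (u d)). apply RInt_ext; auto.
      intros t ht.
      rewrite (box_int_ext p l u hlu d _ (fun _ => 0)); [apply (box_int_zero p l u); lia|lia| |].
      - intros y hy. unfold cross. destruct hag as [ha [hak _]].
        rewrite (DH_high (mi_add a d (k + 1)) (reachable_mi_add p a d _ ha hdp) d hdp); [ring| |auto].
        unfold mi_add. rewrite Nat.eqb_refl. assert (k + 1 <= a d)%nat by (apply hak; lia). lia.
      - apply box_upd; auto. }
    assert (Q0 := alternating_zero Q (k + 1) Qshift Qlast).
    unfold Q in Q0. rewrite mi_add_0 in Q0.
    replace (mi_set g d (k + 1 - 0)) with g in Q0; auto.
    apply functional_extensionality; intro i. unfold mi_set. destruct (Nat.eqb_spec i d); auto.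
    subst. destruct hag as [_ [_ [hgk _]]]. rewrite hgk; lia.
Qed.

Lemma cross_index_beta : cross_index p (beta p k) (beta p k).
Proof.
  unfold beta. repeat split.
  - apply reachable_support. intros i hi. destruct (Nat.ltb_spec i p); auto; lia.
  - intros i hi. destruct (Nat.ltb_spec i p); lia.
  - intros i hi. destruct (Nat.ltb_spec i p); lia.
  - intros; lia.
  - intros i hi. destruct (Nat.ltb_spec i p); auto; lia.
Qed.

Lemma box_int_energy_le : forall x0, box p l u x0 ->
  box_int p l u (fun y => (DH (beta p k) y) ^ 2) x0 <=
  box_int p l u (fun y => (DS (beta p k) y) ^ 2) x0.
Proof.
  intros x0 hx0. set (be := beta p k).
  set (f1 := fun y => DH be y ^ 2). set (f2 := cross be be).
  set (f3 := fun y => (DS be y - DH be y) ^ 2).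
  assert (c1 : cont_within p (box p l u) f1).
  { apply cont_within_ext with (fun y => DH be y * DH be y); [intros; unfold f1; ring|].
    apply cont_within_mult; auto. }
  assert (c3 : cont_within p (box p l u) f3).
  { apply cont_within_ext with (fun y => (DS be y - DH be y) * (DS be y - DH be y));
      [intros; unfold f3; ring|].
    apply cont_within_mult; apply cont_within_minus; auto. }
  assert (I : forall f, cont_within p (box p l u) f -> box_integrable p l u f x0)
    by (intros; apply (box_integrable_cont p l u hlu); auto).
  destruct (box_int_plus_scal p l u hlu p f1 f2 2 x0 (le_n _) (I _ c1) (I _ (cont_within_cross _ _)))
    as [E1 I12].
  destruct (box_int_plus_scal p l u hlu p (fun y => f1 y + 2 * f2 y) f3 1 x0 (le_n _) I12 (I _ c3))
    as [E2 _].
  rewrite (box_int_ext p l u hlu p (fun y => DS be y ^ 2) (fun y => (f1 y + 2 * f2 y) + 1 * f3 y));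
    auto; [|intros y hy; unfold f1, f2, f3, cross; ring].
  rewrite E2, E1.
  assert (Z : box_int p l u f2 x0 = 0).
  { apply cross_term_vanishes; auto; [intros i hi1 hi2; lia|apply cross_index_beta]. }
  assert (P3 : 0 <= box_int p l u f3 x0).
  { rewrite <- (proj1 (box_int_zero p l u p x0 (le_n _))).
    apply (box_int_le p l u hlu); auto; [apply (box_int_zero p l u); auto|].
    intros y hy. unfold f3. apply pow2_ge_0. }
  fold f1. rewrite Z. lra.
Qed.

End CellOrthogonality.

(** * The grid *)

Lemma cell_bounds : forall a b N c i, a i < b i -> (0 < N i)%nat -> (c i < N i)%nat ->
  a i <= cell_lo a b N c i /\ cell_lo a b N c i < cell_hi a b N c i /\ cell_hi a b N c i <= b i.
Proof.
  intros a b N c i hab hN hc. unfold cell_lo, cell_hi.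
  assert (hNr : 0 < INR (N i)) by (apply lt_0_INR; auto).
  set (h := (b i - a i) / INR (N i)).
  assert (hh : 0 < h) by (unfold h; apply Rdiv_lt_0_compat; lra).
  assert (0 <= INR (c i)) by apply pos_INR.
  assert (INR (S (c i)) <= INR (N i)) by (apply le_INR; lia).
  rewrite S_INR in *. split; [nra|split; [nra|]].
  assert (INR (N i) * h = b i - a i) by (unfold h; field; lra). nra.
Qed.

Lemma smooth_on_sub : forall p S S' f D, (forall x, S' x -> S x) ->
  smooth_on p S f D -> smooth_on p S' f D.
Proof.
  intros p S S' f D hS [s1 [s2 s3]]. split; [|split].
  - intros; auto.
  - intros al i hi x hx eps he. destruct (s2 al i hi x (hS x hx) eps he) as [d [hd H]].
    exists d; split; auto.
  - intros al x hx eps he. destruct (s3 al x (hS x hx) eps he) as [d [hd H]].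
    exists d; split; auto.
Qed.

Definition lower_corner (p : nat) (l : pt) : pt := fun i => if Nat.ltb i p then l i else 0.

Lemma box_lower_corner : forall p l u, (forall i, (i < p)%nat -> l i <= u i) ->
  box p l u (lower_corner p l).
Proof.
  intros p l u h i. unfold lower_corner.
  destruct (Nat.ltb_spec i p); split; intros; try lia; auto. split; [lra|auto].
Qed.

Lemma integral_lower_corner : forall p l u g, integral p l u g = box_int p l u g (lower_corner p l).
Proof.
  intros. unfold integral. apply box_int_base_eq. intros i hi. unfold lower_corner.
  destruct (Nat.ltb_spec i p); auto; lia.
Qed.

Lemma cell_energy_le : forall p k a b N c, (forall i, (i < p)%nat -> a i < b i) ->
  (forall i, (i < p)%nat -> (0 < N i)%nat) -> is_cell p N c ->
  forall (Dphi : mi -> pt -> R) P DP psi Dpsi,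
  is_pn_poly p (2 * k + 1) P -> smooth_on p (cell_box p a b N c) P DP ->
  (forall al v, mi_le p k al -> is_vertex p a b N c v -> DP al v = Dphi al v) ->
  smooth_on p (cell_box p a b N c) psi Dpsi ->
  (forall al v, mi_le p k al -> is_vertex p a b N c v -> Dpsi al v = Dphi al v) ->
  integral p (cell_lo a b N c) (cell_hi a b N c) (fun x => (DP (beta p k) x) ^ 2) <=
  integral p (cell_lo a b N c) (cell_hi a b N c) (fun x => (Dpsi (beta p k) x) ^ 2).
Proof.
  intros p k a b N c hab hN hc Dphi P DP psi Dpsi [coef hcoef] sP vP sS vS.
  set (l := cell_lo a b N c) in *. set (u := cell_hi a b N c) in *.
  assert (hlt : forall i, (i < p)%nat -> l i < u i)
    by (intros i hi; apply (cell_bounds a b N c i); auto; apply (hc i); auto).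
  change (cell_box p a b N c) with (box p l u) in *.
  rewrite !integral_lower_corner.
  pose proof sP as [p1 [p2 p3]]. destruct sS as [q1 [q2 q3]].
  apply (box_int_energy_le p l u hlt k DP Dpsi); auto.
  - intros al hr i hi hal x hx.
    rewrite (smooth_on_poly_deriv p l u hlt (2 * k + 1) coef P DP sP); auto.
    + apply poly_deriv_high with i; auto. lia.
    + intros y hy. rewrite poly_deriv_mi0. apply hcoef.
  - intros g x hg hx hv. rewrite vP, vS; auto.
    + intros i; split; intros hi; [apply hv; auto|apply (proj2 (hx i)); auto].
    + intros i; split; intros hi; [apply hv; auto|apply (proj2 (hx i)); auto].
  - apply box_lower_corner. intros; apply Rlt_le; auto.
Qed.

Lemma RInt_uniform_split : forall f a b N, a < b -> (0 < N)%nat -> cont_on a b f ->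
  RInt f a b = fold_right Rplus 0 (map (fun j =>
    RInt f (a + INR j * ((b - a) / INR N)) (a + INR (S j) * ((b - a) / INR N))) (seq 0 N)).
Proof.
  intros f a b N hab hN hc.
  set (h := (b - a) / INR N).
  assert (hNr : 0 < INR N) by (apply lt_0_INR; auto).
  assert (hh : 0 < h) by (unfold h; apply Rdiv_lt_0_compat; lra).
  assert (hNh : INR N * h = b - a) by (unfold h; field; lra).
  assert (G : forall M, (M <= N)%nat -> RInt f a (a + INR M * h) =
     fold_right Rplus 0 (map (fun j => RInt f (a + INR j * h) (a + INR (S j) * h)) (seq 0 M))).
  { induction M; intros hM.
    - simpl. replace (a + 0 * h) with a by ring.
      assert (E := RInt_chasles f a a a (Rle_refl _) (Rle_refl _)
                     ltac:(eapply cont_on_sub; [| |apply hc]; lra)). lra.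
    - rewrite seq_S, fold_plus_app, <- IHM by lia. cbn [map fold_right]. rewrite Nat.add_0_l.
      assert (INR (S M) <= INR N) by (apply le_INR; lia).
      assert (0 <= INR M) by apply pos_INR.
      rewrite S_INR in *.
      assert (0 <= INR M * h) by (apply Rmult_le_pos; lra).
      assert ((INR M + 1) * h <= INR N * h) by (apply Rmult_le_compat_r; lra).
      rewrite Rplus_0_r. symmetry.
      apply RInt_chasles; [nra|nra|apply (cont_on_sub a b); [lra|nra|exact hc]]. }
  rewrite <- G; auto. f_equal. rewrite hNh; ring.
Qed.

Lemma Riemann_integrable_fold_plus : forall (A : nat -> R -> R) a b l,
  (forall j, In j l -> Riemann_integrable (A j) a b) ->
  Riemann_integrable (fun t => fold_right Rplus 0 (map (fun j => A j t) l)) a b.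
Proof.
  intros A a b l. induction l as [|j l IH]; intros H; simpl; [apply RiemannInt_P14|].
  apply Riemann_integrable_plus; [apply H; simpl; auto|].
  apply IH. intros; apply H; simpl; auto.
Qed.

Lemma RInt_fold_plus : forall (A : nat -> R -> R) a b l,
  (forall j, In j l -> Riemann_integrable (A j) a b) ->
  RInt (fun t => fold_right Rplus 0 (map (fun j => A j t) l)) a b =
  fold_right Rplus 0 (map (fun j => RInt (A j) a b) l).
Proof.
  intros A a b l. induction l as [|j l IH]; intros H; simpl; [apply RInt_zero|].
  rewrite RInt_plus, IH; auto; [intros; apply H; simpl; auto|apply H; simpl; auto|].
  apply Riemann_integrable_fold_plus. intros; apply H; simpl; auto.
Qed.

Lemma Riemann_integrable_msum : forall d N (F : mi -> R -> R) a b,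
  (forall c, is_cell d N c -> Riemann_integrable (F c) a b) ->
  Riemann_integrable (fun t => msum d N (fun c => F c t)) a b.
Proof.
  induction d; intros N F a b H; simpl.
  - apply H. intros i; split; intros; [lia|auto].
  - apply (Riemann_integrable_fold_plus (fun j t => msum d N (fun c => F (mi_set c d j) t))).
    intros j hj. apply in_seq in hj. apply IHd.
    intros c hc. apply H. apply is_cell_mi_set; auto; lia.
Qed.

Lemma RInt_msum : forall d N (F : mi -> R -> R) a b,
  (forall c, is_cell d N c -> Riemann_integrable (F c) a b) ->
  RInt (fun t => msum d N (fun c => F c t)) a b = msum d N (fun c => RInt (F c) a b).
Proof.
  induction d; intros N F a b H; simpl; auto.
  rewrite (RInt_fold_plus (fun j t => msum d N (fun c => F (mi_set c d j) t))).
  - apply fold_plus_ext. intros j hj. apply in_seq in hj.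
    apply IHd. intros c hc. apply H. apply is_cell_mi_set; auto; lia.
  - intros j hj. apply in_seq in hj. apply Riemann_integrable_msum.
    intros c hc. apply H. apply is_cell_mi_set; auto; lia.
Qed.

Section GridAdditivity.
Variable p : nat.
Variables a b : pt.
Variable N : nat -> nat.
Hypothesis hab : forall i, (i < p)%nat -> a i < b i.
Hypothesis hN : forall i, (i < p)%nat -> (0 < N i)%nat.
Variable g : pt -> R.
Hypothesis hg : cont_within p (box p a b) g.

Definition partial_cell_lo (d : nat) (c : mi) : pt :=
  fun i => if Nat.ltb i d then cell_lo a b N c i else a i.
Definition partial_cell_hi (d : nat) (c : mi) : pt :=
  fun i => if Nat.ltb i d then cell_hi a b N c i else b i.

Lemma cont_on_cell_int : forall d c x, (d < p)%nat -> is_cell d N c -> box p a b x ->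
  cont_on (a d) (b d) (fun t => box_int d (cell_lo a b N c) (cell_hi a b N c) g (upd x d t)).
Proof.
  intros d c x hd hc hx.
  set (l := partial_cell_lo d c). set (u := partial_cell_hi d c).
  assert (hmix : forall i, (i < p)%nat -> l i <= u i /\ a i <= l i /\ u i <= b i).
  { intros i hi. unfold l, u, partial_cell_lo, partial_cell_hi. destruct (Nat.ltb_spec i d).
    - assert (hci : (c i < N i)%nat) by (apply (proj1 (hc i)); auto).
      destruct (cell_bounds a b N c i) as [h1 [h2 h3]]; auto. lra.
    - assert (a i < b i) by auto. lra. }
  assert (hlu : forall i, (i < p)%nat -> l i <= u i) by (intros; apply hmix; auto).
  assert (hg' : cont_within p (box p l u) g).
  { assert (sub : forall y, box p l u y -> box p a b y).
    { intros y hy i. destruct (hy i) as [h1 h2]. split; auto. intros hi.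
      specialize (hmix i hi). specialize (h1 hi). lra. }
    intros y hy eps he. destruct (hg y (sub y hy) eps he) as [de [hde H]].
    exists de; split; auto. }
  set (x' := fun i => if Nat.ltb i d then l i else x i).
  assert (hx' : box p l u x').
  { intros i. unfold x'. destruct (Nat.ltb_spec i d); split; intros; try lia.
    - split; [lra|]. apply hmix; auto.
    - unfold l, u, partial_cell_lo, partial_cell_hi. destruct (Nat.ltb_spec i d); try lia.
      apply hx; auto.
    - apply hx; auto. }
  assert (L := cont_on_line p l u _ x' d (box_int_cont p l u hlu d g ltac:(lia) hg') hx' hd).
  replace (l d) with (a d) in L by (unfold l, partial_cell_lo; rewrite Nat.ltb_irrefl; auto).
  replace (u d) with (b d) in L by (unfold u, partial_cell_hi; rewrite Nat.ltb_irrefl; auto).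
  replace (fun t => box_int d (cell_lo a b N c) (cell_hi a b N c) g (upd x d t))
    with (fun t => box_int d l u g (upd x' d t)); auto.
  apply functional_extensionality; intro t.
  rewrite (box_int_bounds_eq d l u (cell_lo a b N c) (cell_hi a b N c)).
  - apply box_int_base_eq. intros i hi. unfold upd, x'.
    destruct (Nat.eqb_spec i d); auto. destruct (Nat.ltb_spec i d); auto; lia.
  - intros i hi. unfold l, u, partial_cell_lo, partial_cell_hi.
    destruct (Nat.ltb_spec i d); try lia. auto.
Qed.

Lemma box_int_grid : forall d, (d <= p)%nat -> forall x, box p a b x ->
  box_int d a b g x = msum d N (fun c => box_int d (cell_lo a b N c) (cell_hi a b N c) g x).
Proof.
  induction d; intros hd x hx; simpl; auto.
  assert (hdp : (d < p)%nat) by lia.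
  assert (hle : a d <= b d) by (apply Rlt_le, hab; auto).
  set (G := fun c t => box_int d (cell_lo a b N c) (cell_hi a b N c) g (upd x d t)).
  set (h := (b d - a d) / INR (N d)).
  rewrite (RInt_ext _ (fun t => msum d N (fun c => G c t))); auto;
    [|intros t ht; apply IHd; [lia|apply box_upd; auto]].
  rewrite (RInt_msum d N G (a d) (b d)
             (fun c hc => cont_on_integrable _ _ _ hle (cont_on_cell_int d c x hdp hc hx))).
  rewrite (msum_ext d N _ (fun c => fold_right Rplus 0 (map (fun j =>
             RInt (G c) (a d + INR j * h) (a d + INR (S j) * h)) (seq 0 (N d)))));
    [|intros c hc; apply RInt_uniform_split; auto; apply cont_on_cell_int; auto].
  rewrite msum_fold_plus. apply fold_plus_ext. intros j hj. apply msum_ext. intros c hc.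
  replace (cell_lo a b N (fun i => if Nat.eqb i d then j else c i) d) with (a d + INR j * h)
    by (unfold cell_lo; rewrite Nat.eqb_refl; auto).
  replace (cell_hi a b N (fun i => if Nat.eqb i d then j else c i) d) with (a d + INR (S j) * h)
    by (unfold cell_hi; rewrite Nat.eqb_refl; auto).
  f_equal. apply functional_extensionality; intro t. apply box_int_bounds_eq.
  intros i hi. unfold cell_lo, cell_hi. destruct (Nat.eqb_spec i d); [lia|]. auto.
Qed.

Lemma integral_grid : integral p a b g =
  msum p N (fun c => integral p (cell_lo a b N c) (cell_hi a b N c) g).
Proof.
  rewrite integral_lower_corner, box_int_grid; auto;
    [|apply box_lower_corner; intros; apply Rlt_le; auto].
  apply msum_ext. intros c hc. apply box_int_base_eq. intros i hi. unfold lower_corner.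
  destruct (Nat.ltb_spec i p); auto; lia.
Qed.

End GridAdditivity.

Lemma cell_box_sub : forall p a b N c x, (forall i, (i < p)%nat -> a i < b i) ->
  (forall i, (i < p)%nat -> (0 < N i)%nat) -> is_cell p N c ->
  cell_box p a b N c x -> box p a b x.
Proof.
  intros p a b N c x hab hN hc hx i. destruct (hx i) as [h1 h2]. split; auto. intros hi.
  destruct (cell_bounds a b N c i) as [b1 [b2 b3]]; auto; [apply (proj1 (hc i)); auto|].
  specialize (h1 hi). lra.
Qed.

Lemma F_global_cells : forall p k a b N phi Dphi, (forall i, (i < p)%nat -> a i < b i) ->
  (forall i, (i < p)%nat -> (0 < N i)%nat) -> smooth_on p (box p a b) phi Dphi ->
  F_global p k a b Dphi = F_cells p k a b N (fun _ => Dphi).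
Proof.
  intros p k a b N phi Dphi hab hN [_ [_ hc]].
  apply integral_grid; auto.
  apply cont_within_ext with (fun y => Dphi (beta p k) y * Dphi (beta p k) y); [intros; ring|].
  apply cont_within_mult; auto.
Qed.

Theorem mainTheorem6 :
  forall (p k : nat) (a b : pt) (N : nat -> nat),
  (forall i, (i < p)%nat -> a i < b i) ->
  (forall i, (i < p)%nat -> (0 < N i)%nat) ->
  forall (phi : pt -> R) (Dphi : mi -> pt -> R),
  smooth_on p (box p a b) phi Dphi ->
  forall (P : mi -> pt -> R) (DP : mi -> mi -> pt -> R),
  (forall c, is_cell p N c ->
     is_pn_poly p (2 * k + 1) (P c) /\
     smooth_on p (cell_box p a b N c) (P c) (DP c) /\
     (forall al v, mi_le p k al -> is_vertex p a b N c v -> DP c al v = Dphi al v)) ->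
  F_cells p k a b N DP <= F_global p k a b Dphi /\
  (forall (psi : pt -> R) (Dpsi : mi -> mi -> pt -> R),
     (forall c, is_cell p N c ->
        smooth_on p (cell_box p a b N c) psi (Dpsi c) /\
        (forall al v, mi_le p k al -> is_vertex p a b N c v -> Dpsi c al v = Dphi al v)) ->
     F_cells p k a b N DP <= F_cells p k a b N Dpsi).
Proof.
  intros p k a b N hab hN phi Dphi hphi P DP hP.
  assert (minimal : forall (psi : pt -> R) (Dpsi : mi -> mi -> pt -> R),
     (forall c, is_cell p N c ->
        smooth_on p (cell_box p a b N c) psi (Dpsi c) /\
        (forall al v, mi_le p k al -> is_vertex p a b N c v -> Dpsi c al v = Dphi al v)) ->
     F_cells p k a b N DP <= F_cells p k a b N Dpsi).
  { intros psi Dpsi hpsi. apply msum_le. intros c hc.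
    destruct (hP c hc) as [hpoly [hsP hvP]]. destruct (hpsi c hc) as [hsS hvS].
    apply (cell_energy_le p k a b N c hab hN hc Dphi (P c) (DP c) psi (Dpsi c)); auto. }
  split; auto.
  rewrite (F_global_cells p k a b N phi Dphi); auto.
  apply (minimal phi). intros c hc. split; auto.
  apply smooth_on_sub with (box p a b); auto.
  intros x; apply (cell_box_sub p a b N c); auto.
Qed.
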